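(* Let $R$ be a Noetherian ring (in particular, $R=S=K[x_1,\dots,x_n]$ with $I$ homogeneous), $I\subset R$ an ideal generated by $f_1,\dots,f_m$, and $s,t\in\mathbb{N}$. Then $$Z_s(I,Z_t(I,R))=Z_t(I,Z_s(I,R)),$$ where both sides are regarded as subsets of $\bigwedge^s F\otimes_R \bigwedge^t F$ (the right-hand side via the canonical identification $\bigwedge^t F\otimes\bigwedge^s F\cong \bigwedge^s F\otimes\bigwedge^t F$).
   Context: $F=R^m$ with basis $e_1,\dots,e_m$ and $\phi:F\to R$, $\phi(e_i)=f_i$. The Koszul complex $K(I,R)=\bigwedge^\bullet F$ has differential induced by $\phi$; for an $R$-module $N$, $K(I,N)=\bigwedge^\bullet F\otimes_R N$ with differential $\phi\otimes \mathrm{id}_N$, and $Z_t(I,N)$ denotes its module of cycles in homological position $t$. Since $Z_t(I,R)\subset\bigwedge^t F$ and $\bigwedge^s F$ is free, $Z_s(I,Z_t(I,R))\subset \bigwedge^s F\otimes Z_t(I,R)\subset \bigwedge^s F\otimes\bigwedge^t F$, and similarly for the other side. *)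

From mathcomp Require Import all_boot all_order all_algebra.
Set Implicit Arguments. Unset Strict Implicit. Unset Printing Implicit Defensive.
Import GRing.Theory.
Local Open Scope ring_scope.

Definition is_ideal (R : comRingType) (J : R -> Prop) : Prop :=
  [/\ J 0, (forall x y, J x -> J y -> J (x + y)) & (forall r x, J x -> J (r * x))].

Definition noetherian (R : comRingType) : Prop :=
  forall C : nat -> R -> Prop,
    (forall n, is_ideal (C n)) ->
    (forall n x, C n x -> C n.+1 x) ->
    exists N, forall n, (N <= n)%N -> forall x, C n x <-> C N x.

(* Exterior algebra of F = R^m : an element is given by its coordinates on
   the basis e_A = e_{a_1} /\ ... /\ e_{a_k} (a_1 < ... < a_k), A : {set 'I_m}.
   It lies in \bigwedge^t F iff it is supported on sets of cardinality t. *)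
Definition wedge (R : comRingType) (m : nat) := {set 'I_m} -> R.

Definition homog (R : comRingType) m (t : nat) (x : wedge R m) : Prop :=
  forall A : {set 'I_m}, #|A| != t -> x A = 0.

(* Koszul differential induced by phi(e_i) = f_i:
   d(e_{a_1}/\.../\e_{a_k}) = sum_k (-1)^(k-1) f_{a_k} e_{A \ a_k},
   in coordinates (d x)(B) = sum_{j notin B} (-1)^#{i in B | i < j} f_j x(B u {j}). *)
Definition kdiff (R : comRingType) m (f : 'I_m -> R) (x : wedge R m) : wedge R m :=
  fun B => \sum_(j < m | j \notin B)
             (-1) ^+ #|[set i in B | (i < j)%N]| * f j * x (j |: B).

Definition Zcyc (R : comRingType) m (f : 'I_m -> R) (t : nat) (x : wedge R m) : Prop :=
  homog t x /\ forall B, kdiff f x B = 0.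

(* For a submodule N (given as a predicate) of a module of coordinate
   functions T -> R, K(I,N)_s = \bigwedge^s F (x) N is identified with the
   families (w A)_A of elements of N indexed by the basis e_A, |A| = s
   (this is the inclusion \bigwedge^s F (x) N \subset \bigwedge^s F (x) M,
   valid since \bigwedge^s F is free).  Z_s(I,N) are those with
   (phi (x) id_N) w = 0, i.e. the Koszul differential applied in the first
   factor vanishes. *)
Definition ZcycN (R : comRingType) m (f : 'I_m -> R) (T : Type)
    (N : (T -> R) -> Prop) (s : nat) (w : {set 'I_m} -> T -> R) : Prop :=
  [/\ forall A : {set 'I_m}, #|A| != s -> forall y, w A y = 0,
      forall A, N (w A)
    & forall B y, kdiff f (fun A => w A y) B = 0].

From mathcomp Require Import all_boot all_order all_algebra.

Set Implicit Arguments. Unset Strict Implicit. Unset Printing Implicit Defensive.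
Local Open Scope ring_scope.

(* Because \bigwedge^s F is free, an element of \bigwedge^s F (x) Z_t(I,R) is a
   family of coordinates in Z_t(I,R), so Z_s(I,Z_t(I,R)) consists of the w in
   \bigwedge^s F (x) \bigwedge^t F of bidegree (s,t) killed by both d (x) 1 and
   1 (x) d.  This description is symmetric under the swap of the two factors. *)

Definition Zbicyc (R : comNzRingType) m (f : 'I_m -> R) (s t : nat)
    (w : {set 'I_m} -> {set 'I_m} -> R) : Prop :=
  [/\ forall A : {set 'I_m}, #|A| != s -> forall B, w A B = 0,
      forall B : {set 'I_m}, #|B| != t -> forall A, w A B = 0,
      forall B C, kdiff f (fun A => w A B) C = 0
    & forall A C, kdiff f (w A) C = 0].

Lemma ZcycN_ZcycE (R : comNzRingType) m (f : 'I_m -> R) (s t : nat)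
    (w : {set 'I_m} -> {set 'I_m} -> R) :
  ZcycN f (Zcyc f t) s w <-> Zbicyc f s t w.
Proof.
split.
- case=> homA inZt cycA; split=> //.
  + by move=> B hB A; case: (inZt A) => homB _; exact: homB.
  + by move=> A C; case: (inZt A) => _ cycB; exact: cycB.
- case=> homA homB cycA cycB; split=> // A.
  by split=> [B hB | C]; [exact: homB | exact: cycB].
Qed.

Lemma Zbicyc_swap (R : comNzRingType) m (f : 'I_m -> R) (s t : nat)
    (w : {set 'I_m} -> {set 'I_m} -> R) :
  Zbicyc f s t w <-> Zbicyc f t s (fun B A => w A B).
Proof. by split=> -[homA homB cycA cycB]; split. Qed.

Theorem lemma1p2 (R : comRingType) (m : nat) (f : 'I_m -> R) (s t : nat) :
  noetherian R ->
  forall w : {set 'I_m} -> {set 'I_m} -> R,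
    ZcycN f (Zcyc f t) s w <-> ZcycN f (Zcyc f s) t (fun B A => w A B).
Proof.
move=> _ w.
apply: (iff_trans (ZcycN_ZcycE f s t w)).
apply: (iff_trans (Zbicyc_swap f s t w)).
exact: iff_sym (ZcycN_ZcycE f t s _).
Qed.
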